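(* Let $G$ be a unimodular locally compact group with Haar measure $m$, and let $\nu$ be a Delone measure on $G$. Let $B_l,B_u\subseteq G$ be compact symmetric unit neighborhoods and $C_l,C_u$ positive finite constants with $C_l\le \nu(B_lx)$ and $\nu(B_u^2x)\le C_u$ for all $x\in G$. Then \[ \frac{C_l}{m(B_l^{2})}\cdot I(G)\le \mathrm{L}_\nu^-\le \frac{C_u}{m(B_u)}\cdot I(G), \qquad \frac{C_l}{m(B_l^{2})}\cdot I(G)^{-1} \le \mathrm{L}_\nu^+\le \frac{C_u}{m(B_u)} \cdot I(G)^{-1}. \]
   Context: A measure is a positive Borel measure. $\nu$ is upper translation bounded if $\sup_{x\in G}\nu(B_ux)<\infty$ for some compact symmetric unit neighborhood $B_u$, lower translation bounded if $\inf_{x\in G}\nu(B_lx)>0$ for some compact symmetric unit neighborhood $B_l$, and a Delone measure if both. $\mathcal K$: nonempty compact subsets of $G$; $\mathcal K_p$: those of positive Haar measure. $I(G)=\sup_{K\in \mathcal K}\inf_{A\in \mathcal K_p} m(KA)/m(A)\in[1,\infty]$, with $1/\infty=0$. $\mathrm{L}_\nu^-=\sup_{K\in \mathcal K}\inf_{A\in \mathcal K_p} \nu(KA)/m(A)$, $\mathrm{L}_\nu^+=\inf_{K\in \mathcal K}\sup_{A\in \mathcal K_p} \nu(A)/m(KA)$. $B^2=BB$. *)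

From HB Require Import structures.
From mathcomp Require Import all_boot all_order all_algebra.
From mathcomp Require Import all_classical all_reals all_analysis.
Set Implicit Arguments. Unset Strict Implicit. Unset Printing Implicit Defensive.
Import Order.TTheory GRing.Theory Num.Theory.
Local Open Scope classical_set_scope.
Local Open Scope ring_scope.

Definition is_lc_group (G : ptopologicalType) (mul : G -> G -> G) (inv : G -> G)
    (e : G) : Prop :=
  [/\ (forall x y z, mul x (mul y z) = mul (mul x y) z),
      (forall x, mul e x = x /\ mul x e = x /\
                 mul (inv x) x = e /\ mul x (inv x) = e),
      (continuous (fun p : G * G => mul p.1 p.2) /\ continuous inv),
      hausdorff_space G &
      locally_compact [set: G]].

Definition borelG (G : ptopologicalType) := g_sigma_algebraType (@open G).

Definition setmul (G : Type) (mul : G -> G -> G) (A B : set G) : set G :=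
  [set mul a b | a in A & b in B].
Definition rtrans (G : Type) (mul : G -> G -> G) (A : set G) (x : G) : set G :=
  [set mul a x | a in A].
Definition ltrans (G : Type) (mul : G -> G -> G) (x : G) (A : set G) : set G :=
  [set mul x a | a in A].

Definition haar_measure (R : realType) (G : ptopologicalType)
    (mul : G -> G -> G) (m : set (borelG G) -> \bar R) : Prop :=
  [/\ (forall (x : G) (A : set (borelG G)), measurable A ->
         m (ltrans mul x A) = m A),
      (forall K : set G, compact K -> (m K < +oo)%E),
      (forall U : set G, open U -> U !=set0 -> (0 < m U)%E),
      (forall A : set (borelG G), measurable A ->
         m A = ereal_inf [set m U | U in (fun U : set G => open U /\ A `<=` U)]) &
      (forall U : set G, open U ->
         m U = ereal_sup [set m K | K in (fun K : set G => compact K /\ K `<=` U)])].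

Definition unimodular (R : realType) (G : ptopologicalType)
    (mul : G -> G -> G) (m : set (borelG G) -> \bar R) : Prop :=
  forall (x : G) (A : set (borelG G)), measurable A -> m (rtrans mul A x) = m A.

Definition csun (G : ptopologicalType) (inv : G -> G) (e : G) (B : set G) : Prop :=
  [/\ compact B, inv @` B = B & nbhs e B].

Definition upper_translation_bounded (R : realType) (G : ptopologicalType)
    (mul : G -> G -> G) (inv : G -> G) (e : G) (nu : set (borelG G) -> \bar R) :=
  exists Bu : set G, csun inv e Bu /\
    (ereal_sup [set nu (rtrans mul Bu x) | x in [set: G]] < +oo)%E.

Definition lower_translation_bounded (R : realType) (G : ptopologicalType)
    (mul : G -> G -> G) (inv : G -> G) (e : G) (nu : set (borelG G) -> \bar R) :=
  exists Bl : set G, csun inv e Bl /\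
    (0 < ereal_inf [set nu (rtrans mul Bl x) | x in [set: G]])%E.

Definition delone_measure (R : realType) (G : ptopologicalType)
    (mul : G -> G -> G) (inv : G -> G) (e : G) (nu : set (borelG G) -> \bar R) :=
  upper_translation_bounded mul inv e nu /\ lower_translation_bounded mul inv e nu.

Definition cK (G : ptopologicalType) : set (set G) :=
  [set K | compact K /\ K !=set0].
Definition cKp (R : realType) (G : ptopologicalType) (m : set (borelG G) -> \bar R)
  : set (set G) := [set A | compact A /\ (0 < m A)%E].

Definition IG (R : realType) (G : ptopologicalType) (mul : G -> G -> G)
    (m : set (borelG G) -> \bar R) : \bar R :=
  ereal_sup [set ereal_inf [set (m (setmul mul K A) * inve (m A))%E | A in cKp m]
            | K in @cK G].

Definition Lminus (R : realType) (G : ptopologicalType) (mul : G -> G -> G)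
    (m nu : set (borelG G) -> \bar R) : \bar R :=
  ereal_sup [set ereal_inf [set (nu (setmul mul K A) * inve (m A))%E | A in cKp m]
            | K in @cK G].

Definition Lplus (R : realType) (G : ptopologicalType) (mul : G -> G -> G)
    (m nu : set (borelG G) -> \bar R) : \bar R :=
  ereal_inf [set ereal_sup [set (nu A * inve (m (setmul mul K A)))%E | A in cKp m]
            | K in @cK G].

From HB Require Import structures.
From mathcomp Require Import all_boot all_order all_algebra.
From mathcomp Require Import all_classical all_reals all_analysis.
Import Order.TTheory GRing.Theory Num.Theory.
Set Implicit Arguments. Unset Strict Implicit. Unset Printing Implicit Defensive.
Local Open Scope classical_set_scope.
Local Open Scope ring_scope.

(* For a compact symmetric unit neighbourhood B and a compact set S, a maximal
   family of points s_i of S with pairwise disjoint translates B s_i is finite,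
   since these translates lie in B S, of finite Haar measure; by maximality and
   the symmetry of B, the translates B^2 s_i cover S.  Comparing m and nu on
   these two families (unimodularity gives m(B s_i) = m(B)) yields, for every
   compact S,
     (C_l / m(B_l^2)) m(S) <= nu(B_l S)   and   nu(S) <= (C_u / m(B_u)) m(B_u S).
   The four bounds follow by inserting these estimates in the ratios defining
   L^-_nu and L^+_nu, absorbing B_l and B_u into the compact sets K and A over
   which the extrema are taken. *)

Section InverseExtendedReals.
Variable R : realType.
Implicit Types (c r : R) (x y : \bar R).
Local Open Scope ereal_scope.

Lemma inve_EFin_gt0 r : (0 < r)%R -> r%:E^-1 = r^-1%:E.
Proof. by move=> r0; rewrite inver gt_eqF. Qed.

Lemma pmul_inveE c x : (0 < c)%R -> c%:E * x^-1 = (c^-1%:E * x)^-1.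
Proof.
move=> c0; rewrite inveM ?inve_EFin_gt0 ?invrK ?invr_gt0//.
rewrite /inveM_def; case: x => [r||] //=; rewrite ?invr_gt0 //.
by rewrite invr_eq0 gt_eqF //= invr_ge0 ltW // implybT.
Qed.

Lemma le_pmul_inve_sym c x y : (0 < c)%R -> 0 <= x -> 0 <= y ->
  (x <= c%:E * y^-1) = (y <= c%:E * x^-1).
Proof.
move=> c0; have cV0 : 0 <= c^-1%:E by rewrite lee_fin invr_ge0 ltW.
move=> x0 y0; rewrite pmul_inveE // inve_pge ?inE ?mule_ge0 //.
by rewrite lee_pdivrMl.
Qed.

Lemma pmul_inve_le_sym c x y : (0 < c)%R -> 0 <= x -> 0 <= y ->
  (c%:E * y^-1 <= x) = (c%:E * x^-1 <= y).
Proof.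
move=> c0; have cV0 : 0 <= c^-1%:E by rewrite lee_fin invr_ge0 ltW.
move=> x0 y0; rewrite pmul_inveE // inve_ple ?inE ?mule_ge0 //.
by rewrite lee_pdivlMl // -pmul_inveE.
Qed.

Lemma lee_inve x y : 0 <= x -> x <= y -> y^-1 <= x^-1.
Proof. by move=> x0 xy; rewrite lee_pV2 ?inE // (le_trans x0). Qed.

Lemma sume_nat_const x n : \sum_(i < n) x = n%:R%:E * x.
Proof. by rewrite sumr_const card_ord mule_natl. Qed.

Lemma mule_inve_ratio c a q : (0 < a)%R -> (0 < q)%R ->
  c%:E * a%:E * q%:E^-1 = c%:E * (q%:E * a%:E^-1)^-1.
Proof.
move=> a0 q0; rewrite !inve_EFin_gt0 ?mulr_gt0 ?invr_gt0 // -!EFinM.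
by rewrite invfM invrK mulrAC mulrA.
Qed.

End InverseExtendedReals.

Section LocallyCompactGroup.
Variables (R : realType) (G : ptopologicalType).
Variables (mul : G -> G -> G) (inv : G -> G) (e : G).
Hypothesis hG : is_lc_group mul inv e.

Local Notation "A *s B" := (setmul mul A B) (at level 40, left associativity).

Lemma lcg_mulA x y z : mul x (mul y z) = mul (mul x y) z.
Proof. by case: hG. Qed.

Lemma lcg_mul1g x : mul e x = x.
Proof. by case: hG => _ /(_ x) []. Qed.

Lemma lcg_mulVg x : mul (inv x) x = e.
Proof. by case: hG => _ /(_ x) [_ [_ []]]. Qed.

Lemma setmulA (A B C : set G) : A *s B *s C = A *s (B *s C).
Proof.
apply/seteqP; split => x.
  case=> _ [a Aa [b Bb <-]] [c Cc <-].
  by exists a => //; exists (mul b c); [exists b => //; exists c|rewrite lcg_mulA].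
case=> a Aa [_ [b Bb [c Cc <-]] <-].
by exists (mul a b); [exists a => //; exists b|exists c => //; rewrite lcg_mulA].
Qed.

Lemma rtrans_setmul1 (B : set G) x : rtrans mul B x = B *s [set x].
Proof.
apply/seteqP; split => y; first by case=> a Ba <-; exists a => //; exists x.
by case=> a Ba [_ -> <-]; exists a.
Qed.

Lemma ltrans_set1mul (A : set G) x : ltrans mul x A = [set x] *s A.
Proof.
apply/seteqP; split => y; first by case=> a Aa <-; exists x => //; exists a.
by case=> _ -> [a Aa <-]; exists a.
Qed.

Lemma compact_setmul {A B : set G} : compact A -> compact B -> compact (A *s B).
Proof.
move=> cA cB; have -> : A *s B = (fun p : G * G => mul p.1 p.2) @` (A `*` B).
  apply/seteqP; split => x; first by case=> a Aa [b Bb <-]; exists (a, b).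
  by case=> -[a b] [/= Aa Bb] <-; exists a => //; exists b.
apply: continuous_compact; last exact: compact_setX.
by apply: continuous_subspaceT; case: hG => _ _ [].
Qed.

Lemma compact_rtrans (B : set G) x : compact B -> compact (rtrans mul B x).
Proof.
by move=> cB; rewrite rtrans_setmul1; apply: compact_setmul => //; exact: compact_set1.
Qed.

Lemma measurable_compact {S : set G} : compact S -> measurable (S : set (borelG G)).
Proof.
move=> cS; rewrite -[S]setCK; apply: measurableC; apply: sub_sigma_algebra.
by rewrite /= openC; apply: compact_closed => //; case: hG.
Qed.

Lemma cK_setmul {K L : set G} : cK K -> cK L -> cK (K *s L).
Proof.
move=> [cK0 [k Kk]] [cL [l Ll]]; split; first exact: compact_setmul.
by exists (mul k l); exists k => //; exists l.
Qed.

Lemma csun_unit {B : set G} : csun inv e B -> B e.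
Proof. by case=> _ _ /nbhs_singleton. Qed.

Lemma csun_inv {B : set G} b : csun inv e B -> B b -> B (inv b).
Proof. by case=> _ hs _ Bb; rewrite -hs; exists b. Qed.

Lemma csun_cK {B : set G} : csun inv e B -> cK B.
Proof. by move=> hB; split; [case: hB|exists e; exact: csun_unit]. Qed.

Variable m : {measure set (borelG G) -> \bar R}.
Hypotheses (hm : haar_measure mul m) (hunim : unimodular mul m).

Lemma haar_compact_lty {S : set G} : compact S -> (m S < +oo)%E.
Proof. by case: hm => _ h _ _ _; apply: h. Qed.

Lemma haar_compactE {S : set G} : compact S -> m S = (fine (m S))%:E.
Proof. by move=> cS; rewrite fineK // ge0_fin_numE // haar_compact_lty. Qed.

Lemma haar_nbhs_gt0 (B : set G) (x : G) : compact B -> nbhs x B -> (0 < m B)%E.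
Proof.
move=> cB; rewrite nbhsE => -[U [oU Ux] UB].
apply: (@lt_le_trans _ _ (m U)); first by case: hm => _ _ h _ _; apply: h => //; exists x.
by apply: le_measure => //; rewrite inE; [exact: sub_sigma_algebra|exact: measurable_compact].
Qed.

Lemma haar_rtrans {B : set G} x : compact B -> m (rtrans mul B x) = m B.
Proof. by move=> cB; apply: hunim; apply: measurable_compact. Qed.

Lemma haar_le_setmul {K A : set G} : cK K -> compact A -> (m A <= m (K *s A))%E.
Proof.
move=> [cK0 [k Kk]] cA; case: hm => linv _ _ _ _.
rewrite -(linv k A (measurable_compact cA)) ltrans_set1mul.
apply: le_measure; rewrite ?inE.
- by apply: measurable_compact; apply: compact_setmul => //; exact: compact_set1.
- by apply: measurable_compact; apply: compact_setmul.
- by move=> _ [_ -> [a Aa <-]]; exists k => //; exists a.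
Qed.

Lemma cKp_setmul {K A : set G} : cK K -> cKp m A -> cKp m (K *s A).
Proof.
move=> hK [cA mA]; split; first by apply: compact_setmul => //; case: hK.
by apply: lt_le_trans mA _; exact: haar_le_setmul.
Qed.

Lemma cKp_EFin {A : set G} : cKp m A -> exists2 a : R, (0 < a)%R & m A = a%:E.
Proof. by move=> [cA mA]; exists (fine (m A)); rewrite -?lte_fin -haar_compactE. Qed.

Lemma csun_cKp {B : set G} : csun inv e B -> cKp m B.
Proof. by case=> cB _ Be; split => //; exact: haar_nbhs_gt0 Be. Qed.

Lemma EFin_mul_inve_haar (C : R) {A : set G} : cKp m A ->
  (C%:E * (m A)^-1 = (C / fine (m A))%:E)%E.
Proof. by case/cKp_EFin => a a0 ->; rewrite inve_EFin_gt0 // -EFinM. Qed.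

Lemma fine_haar_gt0 {A : set G} : cKp m A -> (0 < fine (m A))%R.
Proof. by case/cKp_EFin => a a0 ->. Qed.

Definition rpacking (B S : set G) (n : nat) (f : nat -> G) :=
  (forall i, (i < n)%N -> S (f i)) /\
  (forall i j, (i < n)%N -> (j < n)%N -> i <> j ->
     rtrans mul B (f i) `&` rtrans mul B (f j) = set0).

Lemma rpacking_measure (mu : {measure set (borelG G) -> \bar R}) {B S n f} :
  compact B -> rpacking B S n f ->
  mu (\big[setU/set0]_(i < n) rtrans mul B (f i)) =
  (\sum_(i < n) mu (rtrans mul B (f i)))%E.
Proof.
move=> cB [_ hd]; rewrite measure_bigsetU_ord_cond //.
  by move=> i _; apply: measurable_compact; exact: compact_rtrans.
move=> i j _ _ /set0P; apply: contraTeq => ij.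
by rewrite hd ?eqxx // => /val_inj /eqP; rewrite (negbTE ij).
Qed.

Lemma rpacking_sub {B S n f} : rpacking B S n f ->
  \big[setU/set0]_(i < n) rtrans mul B (f i) `<=` B *s S.
Proof.
move=> [hS _]; rewrite -(bigcup_mkord n (fun i => rtrans mul B (f i))).
move=> _ [i /= ilt [b Bb <-]].
by exists b => //; exists (f i) => //; exact: hS.
Qed.

Lemma sum_rpacking_le (mu : {measure set (borelG G) -> \bar R}) {B S n f} :
  compact B -> compact S -> rpacking B S n f ->
  (\sum_(i < n) mu (rtrans mul B (f i)) <= mu (B *s S))%E.
Proof.
move=> cB cS hp; rewrite -(rpacking_measure _ cB hp); apply: le_measure; rewrite ?inE.
- by apply: bigsetU_measurable => i _; apply: measurable_compact; exact: compact_rtrans.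
- by apply: measurable_compact; exact: compact_setmul.
- exact: rpacking_sub hp.
Qed.

Lemma rpacking_haar_le {B S n f} : csun inv e B -> compact S -> rpacking B S n f ->
  (n%:R%:E * m B <= m (B *s S))%E.
Proof.
move=> [cB _ _] cS hp; apply: le_trans (sum_rpacking_le m cB cS hp).
by rewrite -sume_nat_const; apply: lee_sum => i _; rewrite haar_rtrans.
Qed.

Lemma rtrans_disjoint {B : set G} x y : csun inv e B -> ~ rtrans mul (B *s B) y x ->
  rtrans mul B x `&` rtrans mul B y = set0.
Proof.
move=> hB Bxy; apply/seteqP; split => // _ [[b1 Bb1 <-] [b2 Bb2 hb]]; apply: Bxy.
exists (mul (inv b1) b2); first by exists (inv b1); [exact: csun_inv|exists b2].
by rewrite -lcg_mulA hb lcg_mulA lcg_mulVg lcg_mul1g.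
Qed.

Lemma rpacking_extend {B S n f} s : rpacking B S n f -> S s ->
  (forall i, (i < n)%N -> rtrans mul B s `&` rtrans mul B (f i) = set0) ->
  rpacking B S n.+1 (fun i => if i == n then s else f i).
Proof.
move=> [hS hd] Ss hs; split=> [i|i j]; rewrite ?ltnS.
  by case: eqVneq => [//|ni] ilen; apply: hS; rewrite ltn_neqAle ni.
move=> ilen jlen; case: (eqVneq i n) => [->|ni]; case: (eqVneq j n) => [->|nj] //.
- by move=> _; apply: hs; rewrite ltn_neqAle nj.
- by move=> _; rewrite setIC; apply: hs; rewrite ltn_neqAle ni.
- by apply: hd; rewrite ltn_neqAle ?ni ?nj.
Qed.

Lemma rpacking_size_bounded {B S : set G} : csun inv e B -> compact S ->
  exists N, forall n f, rpacking B S n f -> (n <= N)%N.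
Proof.
move=> hB cS; have cBS : compact (B *s S) by apply: compact_setmul => //; case: hB.
have [b b0 mB] := cKp_EFin (csun_cKp hB).
have mBS := haar_compactE cBS; set M := fine _ in mBS.
have M0 : 0 <= M by rewrite -lee_fin -mBS.
exists (Num.bound (M / b)) => n f hp.
have := rpacking_haar_le hB cS hp; rewrite mB mBS -EFinM lee_fin -ler_pdivlMr // => nle.
rewrite -(ler_nat R); apply: ltW; apply: le_lt_trans nle _.
by apply: archi_boundP; rewrite divr_ge0 // ltW.
Qed.

Lemma maximal_rpacking {B S : set G} : csun inv e B -> compact S ->
  exists n f, rpacking B S n f /\
    S `<=` \big[setU/set0]_(i < n) rtrans mul (B *s B) (f i).
Proof.
move=> hB cS; have [N hN] := rpacking_size_bounded hB cS.
pose P n := `[< exists f, rpacking B S n f >].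
have P0 : P 0%N by apply/asboolP; exists (fun=> e); split.
have PN n : P n -> (n <= N)%N by case/asboolP => f; exact: hN.
case: (ex_maxnP (ex_intro P 0%N P0) PN) => n /asboolP [f hp] nmax.
exists n, f; split => // s Ss.
rewrite -(bigcup_mkord n (fun i => rtrans mul (B *s B) (f i))); apply: contrapT => sU.
suff /nmax : P n.+1 by rewrite ltnn.
apply/asboolP; exists (fun i => if i == n then s else f i).
by apply: rpacking_extend => // i ilt; apply: rtrans_disjoint => // ?; apply: sU; exists i.
Qed.

Lemma measure_le_sum_rtrans (mu : {measure set (borelG G) -> \bar R})
    {C S : set G} {n} {f : nat -> G} :
  compact C -> compact S -> S `<=` \big[setU/set0]_(i < n) rtrans mul C (f i) ->
  (mu S <= \sum_(i < n) mu (rtrans mul C (f i)))%E.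
Proof.
move=> cC cS; apply: (@content_subadditive _ _ _ mu S (fun i => rtrans mul C (f i))).
  by move=> i _; apply: measurable_compact; exact: compact_rtrans.
exact: measurable_compact.
Qed.

Lemma haar_density_upper (nu : {measure set (borelG G) -> \bar R}) {B : set G} (C : R) :
  csun inv e B -> (forall x, (nu (rtrans mul (B *s B) x) <= C%:E)%E) ->
  forall S, compact S -> (nu S <= (C / fine (m B))%:E * m (B *s S))%E.
Proof.
move=> hB hC S cS; have cB : compact B by case: hB.
have [b b0 mB] := cKp_EFin (csun_cKp hB).
have [n [f [hp cover]]] := maximal_rpacking hB cS.
have nuS : (nu S <= n%:R%:E * C%:E)%E.
  apply: le_trans (measure_le_sum_rtrans nu (compact_setmul cB cB) cS cover) _.
  by rewrite -sume_nat_const; apply: lee_sum => i _.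
have Cb0 : (0 <= (C / b)%:E)%E.
  by rewrite lee_fin divr_ge0 ?(ltW b0) // -lee_fin (le_trans _ (hC e)).
apply: (le_trans nuS); rewrite mB /=.
apply: le_trans (lee_wpmul2l Cb0 (rpacking_haar_le hB cS hp)).
by rewrite mB -!EFinM lee_fin mulrCA divfK ?gt_eqF.
Qed.

Lemma haar_density_lower (nu : {measure set (borelG G) -> \bar R}) {B : set G} (C : R) :
  csun inv e B -> (0 <= C)%R -> (forall x, (C%:E <= nu (rtrans mul B x))%E) ->
  forall S, compact S -> ((C / fine (m (B *s B)))%:E * m S <= nu (B *s S))%E.
Proof.
move=> hB C0 hC S cS; have cB : compact B by case: hB.
have cBB : compact (B *s B) by exact: compact_setmul.
have [q q0 mBB] := cKp_EFin (cKp_setmul (csun_cK hB) (csun_cKp hB)).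
have [n [f [hp cover]]] := maximal_rpacking hB cS.
have mS : (m S <= n%:R%:E * q%:E)%E.
  apply: le_trans (measure_le_sum_rtrans m cBB cS cover) _.
  rewrite -sume_nat_const; apply: lee_sum => i _.
  by rewrite haar_rtrans // mBB.
have nuBS : (n%:R%:E * C%:E <= nu (B *s S))%E.
  apply: le_trans (sum_rpacking_le nu cB cS hp).
  by rewrite -sume_nat_const; apply: lee_sum => i _.
apply: le_trans nuBS; rewrite mBB /=.
have Cq0 : (0 <= (C / q)%:E)%E by rewrite lee_fin divr_ge0 // ltW.
apply: le_trans (lee_wpmul2l Cq0 mS) _.
by rewrite -!EFinM lee_fin mulrCA divfK ?gt_eqF.
Qed.

Local Open Scope ereal_scope.

Definition ratio_inf (mu : set (borelG G) -> \bar R) (K : set G) : \bar R :=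
  ereal_inf [set mu (K *s A) * (m A)^-1 | A in cKp m].

Definition ratio_sup (mu : set (borelG G) -> \bar R) (K : set G) : \bar R :=
  ereal_sup [set mu A * (m (K *s A))^-1 | A in cKp m].

Lemma IGE : IG mul m = ereal_sup [set ratio_inf m K | K in @cK G].
Proof. by []. Qed.

Lemma LminusE (nu : set (borelG G) -> \bar R) :
  Lminus mul m nu = ereal_sup [set ratio_inf nu K | K in @cK G].
Proof. by []. Qed.

Lemma LplusE (nu : set (borelG G) -> \bar R) :
  Lplus mul m nu = ereal_inf [set ratio_sup nu K | K in @cK G].
Proof. by []. Qed.

Lemma ratio_inf_ge0 (mu : {measure set (borelG G) -> \bar R}) K : 0 <= ratio_inf mu K.
Proof. by apply: le_ereal_inf_tmp => _ [A _ <-]; rewrite mule_ge0 // inve_ge0. Qed.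

Lemma ratio_sup_ge0 (mu : {measure set (borelG G) -> \bar R}) K {A : set G} :
  cKp m A -> 0 <= ratio_sup mu K.
Proof.
move=> hA; apply: le_trans (_ : 0 <= mu A * (m (K *s A))^-1) _.
  by rewrite mule_ge0 // inve_ge0.
by apply: ereal_sup_ubound; exists A.
Qed.

Lemma IG_ge0 {B : set G} : csun inv e B -> 0 <= IG mul m.
Proof.
move=> hB; rewrite IGE; apply: le_trans (ratio_inf_ge0 m B) _.
by apply: ereal_sup_ubound; exists B => //; exact: csun_cK.
Qed.

Lemma Lplus_ge0 (nu : {measure set (borelG G) -> \bar R}) {B : set G} :
  csun inv e B -> 0 <= Lplus mul m nu.
Proof.
move=> hB; rewrite LplusE; apply: le_ereal_inf_tmp => _ [K _ <-].
exact: ratio_sup_ge0 (csun_cKp hB).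
Qed.

Section LowerDensity.
Variables (nu : {measure set (borelG G) -> \bar R}) (B : set G) (c : R).
Hypotheses (hB : csun inv e B) (c0 : (0 < c)%R).
Hypothesis nu_ge : forall S, compact S -> c%:E * m S <= nu (B *s S).

Lemma ratio_inf_lower {K : set G} : cK K -> c%:E * ratio_inf m K <= ratio_inf nu (B *s K).
Proof.
move=> hK; apply: le_ereal_inf_tmp => _ [A hA <-].
have mKA : ratio_inf m K <= m (K *s A) * (m A)^-1 by apply: ereal_inf_lbound; exists A.
apply: le_trans (lee_wpmul2l _ mKA) _; first by rewrite lee_fin ltW.
rewrite setmulA muleA; apply: lee_wpmul2r; first by rewrite inve_ge0.
by apply: nu_ge; apply: compact_setmul; [case: hK|case: hA].
Qed.

Lemma Lminus_ge : c%:E * IG mul m <= Lminus mul m nu.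
Proof.
rewrite IGE LminusE -lee_pdivlMl //; apply: ge_ereal_sup => _ [K hK <-].
rewrite lee_pdivlMl //; apply: le_trans (ratio_inf_lower hK) _.
by apply: ereal_sup_ubound; exists (B *s K) => //; exact: cK_setmul (csun_cK hB) hK.
Qed.

Lemma ratio_sup_lower {K : set G} : cK K -> c%:E * (ratio_inf m (K *s B))^-1 <= ratio_sup nu K.
Proof.
move=> hK; have hKB := cK_setmul hK (csun_cK hB).
have nuK0 := ratio_sup_ge0 nu K (csun_cKp hB).
rewrite pmul_inve_le_sym // ?ratio_inf_ge0 //; apply: le_ereal_inf_tmp => _ [A hA <-].
rewrite -pmul_inve_le_sym // ?mule_ge0 ?inve_ge0 //.
have hBA := cKp_setmul (csun_cK hB) hA.
apply: le_trans (_ : _ <= nu (B *s A) * (m (K *s (B *s A)))^-1) _; last first.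
  by apply: ereal_sup_ubound; exists (B *s A).
have [a a0 mA] := cKp_EFin hA; have [q q0 mKBA] := cKp_EFin (cKp_setmul hKB hA).
rewrite -setmulA mKBA mA -mule_inve_ratio //.
apply: lee_wpmul2r; first by rewrite inve_ge0 lee_fin ltW.
by rewrite -mA; apply: nu_ge; case: hA.
Qed.

Lemma Lplus_ge : c%:E * (IG mul m)^-1 <= Lplus mul m nu.
Proof.
rewrite IGE LplusE; apply: le_ereal_inf_tmp => _ [K hK <-].
apply: le_trans (ratio_sup_lower hK); apply: lee_wpmul2l; first by rewrite lee_fin ltW.
apply: lee_inve; first exact: ratio_inf_ge0.
by apply: ereal_sup_ubound; exists (K *s B) => //; exact: cK_setmul hK (csun_cK hB).
Qed.

End LowerDensity.

Section UpperDensity.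
Variables (nu : {measure set (borelG G) -> \bar R}) (B : set G) (c : R).
Hypotheses (hB : csun inv e B) (c0 : (0 < c)%R).
Hypothesis nu_le : forall S, compact S -> nu S <= c%:E * m (B *s S).

Lemma ratio_inf_upper {K : set G} : cK K -> ratio_inf nu K <= c%:E * ratio_inf m (B *s K).
Proof.
move=> hK; rewrite -lee_pdivrMl //; apply: le_ereal_inf_tmp => _ [A hA <-].
rewrite lee_pdivrMl //.
have nuKA : ratio_inf nu K <= nu (K *s A) * (m A)^-1 by apply: ereal_inf_lbound; exists A.
apply: le_trans nuKA _; rewrite setmulA muleA; apply: lee_wpmul2r; first by rewrite inve_ge0.
by apply: nu_le; apply: compact_setmul; [case: hK|case: hA].
Qed.

Lemma Lminus_le : Lminus mul m nu <= c%:E * IG mul m.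
Proof.
rewrite IGE LminusE; apply: ge_ereal_sup => _ [K hK <-].
apply: le_trans (ratio_inf_upper hK) _; apply: lee_wpmul2l; first by rewrite lee_fin ltW.
by apply: ereal_sup_ubound; exists (B *s K) => //; exact: cK_setmul (csun_cK hB) hK.
Qed.

Lemma ratio_sup_upper {K : set G} : cK K -> ratio_sup nu (K *s B) <= c%:E * (ratio_inf m K)^-1.
Proof.
move=> hK; apply: ge_ereal_sup => _ [A hA <-].
have hBA := cKp_setmul (csun_cK hB) hA.
apply: le_trans (_ : _ <= c%:E * (m (K *s (B *s A)) * (m (B *s A))^-1)^-1) _.
  have [a a0 mBA] := cKp_EFin hBA; have [q q0 mKBA] := cKp_EFin (cKp_setmul hK hBA).
  rewrite setmulA mBA mKBA -mule_inve_ratio //.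
  apply: lee_wpmul2r; first by rewrite inve_ge0 lee_fin ltW.
  by rewrite -mBA; apply: nu_le; case: hA.
apply: lee_wpmul2l; first by rewrite lee_fin ltW.
apply: lee_inve; first exact: ratio_inf_ge0.
by apply: ereal_inf_lbound; exists (B *s A).
Qed.

Lemma Lplus_le : Lplus mul m nu <= c%:E * (IG mul m)^-1.
Proof.
rewrite le_pmul_inve_sym // ?(IG_ge0 hB) ?(Lplus_ge0 _ hB) // IGE.
apply: ge_ereal_sup => _ [K hK <-].
rewrite -le_pmul_inve_sym // ?(Lplus_ge0 _ hB) ?ratio_inf_ge0 //.
apply: le_trans (ratio_sup_upper hK); rewrite LplusE.
by apply: ereal_inf_lbound; exists (K *s B) => //; exact: cK_setmul hK (csun_cK hB).
Qed.

End UpperDensity.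

End LocallyCompactGroup.

Theorem lemma3p7 (R : realType) (G : ptopologicalType)
    (mul : G -> G -> G) (inv : G -> G) (e : G)
    (hG : is_lc_group mul inv e)
    (m : {measure set (borelG G) -> \bar R})
    (hm : haar_measure mul m) (hunim : unimodular mul m)
    (nu : {measure set (borelG G) -> \bar R})
    (hnu : delone_measure mul inv e nu)
    (Bl Bu : set G) (hBl : csun inv e Bl) (hBu : csun inv e Bu)
    (Cl Cu : R) (hCl : 0 < Cl) (hCu : 0 < Cu)
    (hl : forall x : G, (Cl%:E <= nu (rtrans mul Bl x))%E)
    (hu : forall x : G, (nu (rtrans mul (setmul mul Bu Bu) x) <= Cu%:E)%E) :
  [/\ (Cl%:E * inve (m (setmul mul Bl Bl)) * IG mul m <= Lminus mul m nu)%E,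
      (Lminus mul m nu <= Cu%:E * inve (m Bu) * IG mul m)%E,
      (Cl%:E * inve (m (setmul mul Bl Bl)) * inve (IG mul m) <= Lplus mul m nu)%E &
      (Lplus mul m nu <= Cu%:E * inve (m Bu) * inve (IG mul m))%E].
Proof.
have Bl2_cKp := cKp_setmul hG hm (csun_cK hBl) (csun_cKp hG hm hBl).
have Bu_cKp := csun_cKp hG hm hBu.
rewrite !(EFin_mul_inve_haar hm _ Bl2_cKp) !(EFin_mul_inve_haar hm _ Bu_cKp).
have cl0 : 0 < Cl / fine (m (setmul mul Bl Bl)) by rewrite divr_gt0 // (fine_haar_gt0 hm).
have cu0 : 0 < Cu / fine (m Bu) by rewrite divr_gt0 // (fine_haar_gt0 hm).
have nu_ge := haar_density_lower hG hm hunim hBl (ltW hCl) hl.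
have nu_le := haar_density_upper hG hm hunim hBu hu.
split.
- exact (Lminus_ge hG hBl cl0 nu_ge).
- exact (Lminus_le hG hBu cu0 nu_le).
- exact (Lplus_ge hG hm hBl cl0 nu_ge).
- exact (Lplus_le hG hm hBu cu0 nu_le).
Qed.
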